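(* In the fixed-base chain setting of the context, let $\delta\boldsymbol{\pi}\in\mathbb{R}^{10N}$ and let $i\ge 2$ be such that $\delta\mathbf{I}_j=\mathbf{0}$ for all $j>i$, where $\delta\mathbf I_j=[\delta\boldsymbol\pi_j]^\wedge$. Define $\delta\mathbf{I}_{i-1}'=\delta\mathbf{I}_{i-1}+({}^{J_i}\mathbf{X}_{i-1})^\top\delta\mathbf{I}_i\,{}^{J_i}\mathbf{X}_{i-1}$ and $\Delta{}^{J_i}\mathbf{I}_i(q_i)={}^{i}\mathbf{X}_{J_i}(q_i)^\top\delta\mathbf{I}_i\,{}^{i}\mathbf{X}_{J_i}(q_i)-\delta\mathbf{I}_i$, and write ${}^{J_i}\mathbf{v}_{i-1}={}^{J_i}\mathbf{X}_{i-1}\mathbf{v}_{i-1}$. Then $\sum_{j=1}^{N}\mathbf{v}_j^\top\delta\mathbf{I}_j\mathbf{v}_j=0$ for all $\mathbf{q},\dot{\mathbf{q}}\in\mathbb R^N$ if and only if all three of the following hold for all $\mathbf{q},\dot{\mathbf{q}}$: (a) $\boldsymbol{\Phi}_i^\top\delta\mathbf{I}_i\mathbf{v}_i=0$; (b) ${}^{J_i}\mathbf{v}_{i-1}^\top\,\Delta{}^{J_i}\mathbf{I}_i(q_i)\,{}^{J_i}\mathbf{v}_{i-1}=0$; (c) $\sum_{j=1}^{i-2}\mathbf{v}_j^\top\delta\mathbf{I}_j\mathbf{v}_j+\mathbf{v}_{i-1}^\top\delta\mathbf{I}_{i-1}'\mathbf{v}_{i-1}=0$.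
   Context: Spatial notation. For $\mathbf{x}\in\mathbb{R}^3$, $\mathbf{S}(\mathbf{x})$ is the skew-symmetric matrix with $\mathbf{S}(\mathbf{x})\mathbf{y}=\mathbf{x}\times\mathbf{y}$. For $\mathbf{v}=[\boldsymbol{\omega};\mathbf{u}]\in\mathbb{R}^6$, $(\mathbf{v}\times)=\begin{bmatrix}\mathbf{S}(\boldsymbol{\omega})&\mathbf{0}\\ \mathbf{S}(\mathbf{u})&\mathbf{S}(\boldsymbol{\omega})\end{bmatrix}$. A spatial transform is a matrix $\begin{bmatrix}\mathbf{R}&\mathbf{0}\\-\mathbf{R}\mathbf{S}(\mathbf{p})&\mathbf{R}\end{bmatrix}$ with $\mathbf{R}\in SO(3)$, $\mathbf{p}\in\mathbb{R}^3$. Inertial parameters $\boldsymbol{\pi}=[m,h_x,h_y,h_z,I_{xx},I_{xy},I_{xz},I_{yy},I_{yz},I_{zz}]^\top\in\mathbb{R}^{10}$; $[\boldsymbol{\pi}]^{\wedge}=\begin{bmatrix}\bar{\mathbf{I}}&\mathbf{S}(\mathbf{h})\\ \mathbf{S}(\mathbf{h})^{\top}&m\mathbf{1}_3\end{bmatrix}$ with $\mathbf{h}=[h_x,h_y,h_z]^\top$ and $\bar{\mathbf{I}}$ the symmetric $3\times3$ matrix with entries $I_{xx},I_{xy},\ldots$. Fixed-base chain. Body $0$ is the fixed ground with $\mathbf{v}_0=\mathbf{0}$. For $i=1,\ldots,N$, joint $i$ has coordinate $q_i\in\mathbb R$ and $\mathbf{v}_i={}^{i}\mathbf{X}_{i-1}(q_i)\mathbf{v}_{i-1}+\boldsymbol{\Phi}_i\dot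 q_i$, with $\boldsymbol{\Phi}_i\in\mathbb{R}^6$ fixed, ${}^{i}\mathbf{X}_{i-1}(q_i)={}^{i}\mathbf{X}_{J_i}(q_i)\,{}^{J_i}\mathbf{X}_{i-1}$, ${}^{J_i}\mathbf{X}_{i-1}$ a constant spatial transform, and ${}^{i}\mathbf{X}_{J_i}(q_i)$ a spatial transform with ${}^{i}\mathbf{X}_{J_i}(0)=\mathbf{1}_6$ and $\frac{d}{dq_i}{}^{i}\mathbf{X}_{J_i}(q_i)=-(\boldsymbol{\Phi}_i\times){}^{i}\mathbf{X}_{J_i}(q_i)$. $\mathbf q=(q_1,\dots,q_N)$ and $\delta\boldsymbol{\pi}=[\delta\boldsymbol{\pi}_1^\top,\ldots,\delta\boldsymbol{\pi}_N^\top]^\top$. *)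

From Stdlib Require Import Reals Lra Lia Arith.
Open Scope R_scope.

(* Vectors and matrices are functions on indices; only indices < 6 (resp. < 3)
   are meaningful. All operations only read in-range entries. *)
Definition Vec := nat -> R.
Definition Mat := nat -> nat -> R.

Fixpoint rsum (n : nat) (f : nat -> R) : R :=
  match n with O => 0 | S k => rsum k f + f k end.

Definition mv6 (A : Mat) (x : Vec) : Vec := fun r => rsum 6 (fun c => A r c * x c).
Definition mm6 (A B : Mat) : Mat := fun r c => rsum 6 (fun k => A r k * B k c).
Definition mm3 (A B : Mat) : Mat := fun r c => rsum 3 (fun k => A r k * B k c).
Definition trm (A : Mat) : Mat := fun r c => A c r.
Definition dot6 (x y : Vec) : R := rsum 6 (fun k => x k * y k).
Definition qf6 (x : Vec) (A : Mat) (y : Vec) : R := dot6 x (mv6 A y).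
Definition madd (A B : Mat) : Mat := fun r c => A r c + B r c.
Definition msub (A B : Mat) : Mat := fun r c => A r c - B r c.
Definition mopp (A : Mat) : Mat := fun r c => - A r c.
Definition mzero : Mat := fun _ _ => 0.
Definition idm : Mat := fun r c => if Nat.eqb r c then 1 else 0.

Definition meq6 (A B : Mat) : Prop := forall r c, (r < 6)%nat -> (c < 6)%nat -> A r c = B r c.
Definition meq3 (A B : Mat) : Prop := forall r c, (r < 3)%nat -> (c < 3)%nat -> A r c = B r c.

(* S(x) : S(x) y = x \times y *)
Definition skew (x : Vec) : Mat := fun r c =>
  match r, c with
  | O, S O => - x 2%nat | O, S (S O) => x 1%nat
  | S O, O => x 2%nat | S O, S (S O) => - x 0%nat
  | S (S O), O => - x 1%nat | S (S O), S O => x 0%nat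
  | _, _ => 0
  end.

Definition block6 (A B C D : Mat) : Mat := fun r c =>
  if Nat.ltb r 3 then (if Nat.ltb c 3 then A r c else B r (c - 3)%nat)
  else (if Nat.ltb c 3 then C (r - 3)%nat c else D (r - 3)%nat (c - 3)%nat).

Definition cross6 (v : Vec) : Mat :=
  let w := fun k => v k in
  let u := fun k => v (k + 3)%nat in
  block6 (skew w) mzero (skew u) (skew w).

Definition det3 (A : Mat) : R :=
  A 0%nat 0%nat * (A 1%nat 1%nat * A 2%nat 2%nat - A 1%nat 2%nat * A 2%nat 1%nat)
  - A 0%nat 1%nat * (A 1%nat 0%nat * A 2%nat 2%nat - A 1%nat 2%nat * A 2%nat 0%nat)
  + A 0%nat 2%nat * (A 1%nat 0%nat * A 2%nat 1%nat - A 1%nat 1%nat * A 2%nat 0%nat).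

Definition is_SO3 (Rm : Mat) : Prop := meq3 (mm3 (trm Rm) Rm) idm /\ det3 Rm = 1.

Definition spatial_transform (X : Mat) : Prop :=
  exists (Rm : Mat) (p : Vec), is_SO3 Rm /\
    meq6 X (block6 Rm mzero (mopp (mm3 Rm (skew p))) Rm).

(* [pi]^wedge, pi = [m, hx, hy, hz, Ixx, Ixy, Ixz, Iyy, Iyz, Izz] *)
Definition Ibar (pi : Vec) : Mat := fun r c =>
  match r, c with
  | O, O => pi 4%nat | O, S O => pi 5%nat | O, S (S O) => pi 6%nat
  | S O, O => pi 5%nat | S O, S O => pi 7%nat | S O, S (S O) => pi 8%nat
  | S (S O), O => pi 6%nat | S (S O), S O => pi 8%nat | S (S O), S (S O) => pi 9%nat
  | _, _ => 0
  end.
Definition hvec (pi : Vec) : Vec := fun k => pi (k + 1)%nat.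
Definition inertia_hat (pi : Vec) : Mat :=
  block6 (Ibar pi) (skew (hvec pi)) (trm (skew (hvec pi)))
         (fun r c => pi 0%nat * idm r c).

Fixpoint vel (XT : nat -> Mat) (XJ : nat -> R -> Mat) (Phi : nat -> Vec)
    (q qd : nat -> R) (k : nat) : Vec :=
  match k with
  | O => fun _ => 0
  | S j => fun r => mv6 (mm6 (XJ (S j) (q (S j))) (XT (S j)))
                        (vel XT XJ Phi q qd j) r + qd (S j) * Phi (S j) r
  end.

Definition energy_sum (XT : nat -> Mat) (XJ : nat -> R -> Mat) (Phi : nat -> Vec)
    (dpi : nat -> Vec) (q qd : nat -> R) (n : nat) : R :=
  rsum n (fun k => qf6 (vel XT XJ Phi q qd (S k)) (inertia_hat (dpi (S k)))
                       (vel XT XJ Phi q qd (S k))).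

(* Only the velocity of body i depends on q_i and qd_i, and it does so through
   v_i = X_J(q_i) (X_T v_{i-1}) + qd_i Phi_i.  Hence the energy is a quadratic
   polynomial in the free variable qd_i,
     E = C + A(q_i) + 2 qd_i B + qd_i^2 Phi_i^T dI_i Phi_i,
   where C collects the terms with X_J replaced by the identity (folding body i
   onto body i-1), A(q_i) is the change caused by the joint rotation, and
   Phi_i^T dI_i v_i = B + qd_i Phi_i^T dI_i Phi_i.  E vanishes identically iff
   its coefficients do; since A(0) = 0 because X_J(0) = 1, while C does not
   depend on q_i, this splits into C = 0 and A = 0. *)
From Pilot Require Import Defs.
From Stdlib Require Import Reals Lra Lia FunctionalExtensionality.
Open Scope R_scope.

Lemma rsum_ext n f g : (forall k, (k < n)%nat -> f k = g k) -> rsum n f = rsum n g.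
Proof.
  induction n as [|n IH]; intros H; simpl; [reflexivity|].
  rewrite IH by (intros; apply H; lia). rewrite H by lia. reflexivity.
Qed.

Lemma quadratic_coefs_eq0 c b a :
  (forall t, c + 2 * t * b + t ^ 2 * a = 0) -> c = 0 /\ b = 0 /\ a = 0.
Proof.
  intros H. pose proof (H 0) as H0. pose proof (H 1) as H1. pose proof (H (-1)) as H2.
  lra.
Qed.

Lemma affine_coefs_eq0 b a : (forall t, b + t * a = 0) -> b = 0 /\ a = 0.
Proof. intros H. pose proof (H 0) as H0. pose proof (H 1) as H1. lra. Qed.

Definition sym6 (D : Mat) : Prop :=
  forall r c, (r < 6)%nat -> (c < 6)%nat -> D r c = D c r.

Lemma mv6_mm6 A B x : mv6 (mm6 A B) x = mv6 A (mv6 B x).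
Proof. apply functional_extensionality; intro r. unfold mv6, mm6; simpl; ring. Qed.

Lemma dot6_mv6_trm x A y : dot6 x (mv6 (trm A) y) = dot6 (mv6 A x) y.
Proof. unfold dot6, mv6, trm; simpl; ring. Qed.

Lemma qf6_congruence x A D : qf6 x (mm6 (trm A) (mm6 D A)) x = qf6 (mv6 A x) D (mv6 A x).
Proof. unfold qf6. rewrite mv6_mm6, dot6_mv6_trm, mv6_mm6. reflexivity. Qed.

Lemma qf6_madd x A B : qf6 x (madd A B) x = qf6 x A x + qf6 x B x.
Proof. unfold qf6, dot6, mv6, madd; simpl; ring. Qed.

Lemma qf6_msub x A B : qf6 x (msub A B) x = qf6 x A x - qf6 x B x.
Proof. unfold qf6, dot6, mv6, msub; simpl; ring. Qed.

Lemma qf6_sym x y D : sym6 D -> qf6 x D y = qf6 y D x.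
Proof.
  intros HD. unfold qf6, dot6, mv6; simpl.
  rewrite (HD 1%nat 0%nat), (HD 2%nat 0%nat), (HD 3%nat 0%nat), (HD 4%nat 0%nat),
    (HD 5%nat 0%nat), (HD 2%nat 1%nat), (HD 3%nat 1%nat), (HD 4%nat 1%nat),
    (HD 5%nat 1%nat), (HD 3%nat 2%nat), (HD 4%nat 2%nat), (HD 5%nat 2%nat),
    (HD 4%nat 3%nat), (HD 5%nat 3%nat), (HD 5%nat 4%nat) by lia.
  ring.
Qed.

Lemma inertia_hat_sym p : sym6 (inertia_hat p).
Proof.
  intros r c Hr Hc.
  do 6 (destruct r as [|r]; [do 6 (destruct c as [|c]; [reflexivity|]); lia|]). lia.
Qed.

Lemma qf6_ext x x' D :
  (forall k, (k < 6)%nat -> x k = x' k) -> qf6 x D x = qf6 x' D x'.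
Proof.
  intros Hx. unfold qf6, dot6. apply rsum_ext; intros k Hk. rewrite Hx by lia.
  f_equal. unfold mv6. apply rsum_ext; intros c Hc. rewrite Hx by lia. reflexivity.
Qed.

Lemma qf6_mzero x D : meq6 D mzero -> qf6 x D x = 0.
Proof.
  intros HD. unfold qf6, dot6, mv6.
  rewrite (rsum_ext _ _ (fun _ => 0)); [simpl; ring|].
  intros k Hk. rewrite (rsum_ext _ _ (fun _ => 0)); [simpl; ring|].
  intros c Hc. rewrite HD by lia. unfold mzero; ring.
Qed.

Lemma mv6_idm M x r : meq6 M idm -> (r < 6)%nat -> mv6 M x r = x r.
Proof.
  intros HM Hr. unfold mv6. rewrite (rsum_ext _ _ (fun c => idm r c * x c)).
  2: { intros c Hc. rewrite HM by lia. reflexivity. }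
  do 6 (destruct r as [|r]; [unfold idm; simpl; ring|]). lia.
Qed.

Lemma qf6_joint_step D M T v P s : sym6 D ->
  let w := mv6 T v in
  let u := fun r => mv6 (mm6 M T) v r + s * P r in
  qf6 u D u = qf6 w (msub (mm6 (trm M) (mm6 D M)) D) w + qf6 w D w
              + 2 * s * dot6 P (mv6 D (mv6 M w)) + s ^ 2 * dot6 P (mv6 D P).
Proof.
  intros HD w u.
  assert (Hexp : qf6 u D u = qf6 (mv6 M w) D (mv6 M w)
          + s * (qf6 (mv6 M w) D P + qf6 P D (mv6 M w)) + s ^ 2 * qf6 P D P).
  { unfold u, w. rewrite mv6_mm6. unfold qf6, dot6, mv6; simpl; ring. }
  rewrite Hexp, qf6_msub, qf6_congruence, (qf6_sym (mv6 M w) P D HD).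
  unfold qf6; ring.
Qed.

Definition fupd (f : nat -> R) (i : nat) (t : R) : nat -> R :=
  fun j => if Nat.eqb j i then t else f j.

Lemma fupd_eq f i t : fupd f i t i = t.
Proof. unfold fupd. rewrite Nat.eqb_refl. reflexivity. Qed.

Lemma fupd_lt f i t j : (j < i)%nat -> fupd f i t j = f j.
Proof. intros Hj. unfold fupd. destruct (Nat.eqb_spec j i); [lia | reflexivity]. Qed.

Section Chain.

Variables (XT : nat -> Mat) (XJ : nat -> R -> Mat) (Phi : nat -> Vec) (dpi : nat -> Vec).

Local Notation vel := (vel XT XJ Phi).
Local Notation energy_sum := (energy_sum XT XJ Phi dpi).

Lemma vel_succ q qd k : vel q qd (S k) =
  fun r => mv6 (mm6 (XJ (S k) (q (S k))) (XT (S k))) (vel q qd k) r + qd (S k) * Phi (S k) r.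
Proof. reflexivity. Qed.

Lemma vel_prefix q q' qd qd' k :
  (forall j, (j <= k)%nat -> q j = q' j /\ qd j = qd' j) -> vel q qd k = vel q' qd' k.
Proof.
  induction k as [|k IH]; intros H; [reflexivity|].
  simpl. rewrite IH by (intros; apply H; lia).
  destruct (H (S k) (le_n _)) as [-> ->]. reflexivity.
Qed.

Lemma energy_sum_prefix q q' qd qd' n :
  (forall j, (j <= n)%nat -> q j = q' j /\ qd j = qd' j) ->
  energy_sum q qd n = energy_sum q' qd' n.
Proof.
  intros H. unfold Defs.energy_sum. apply rsum_ext. intros k Hk.
  rewrite (vel_prefix q q' qd qd' (S k)) by (intros; apply H; lia). reflexivity.
Qed.

Lemma energy_sum_trunc q qd i N : (i <= N)%nat ->
  (forall j, (i < j <= N)%nat -> meq6 (inertia_hat (dpi j)) mzero) ->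
  energy_sum q qd N = energy_sum q qd i.
Proof.
  intros HiN Hz. induction N as [|N IH].
  - replace i with 0%nat by lia. reflexivity.
  - destruct (Nat.eq_dec i (S N)) as [->|Hne]; [reflexivity|].
    unfold Defs.energy_sum in *. rewrite <- IH by (try lia; intros; apply Hz; lia).
    cbn [rsum]. rewrite qf6_mzero by (apply Hz; lia). ring.
Qed.

(* Writing the joint as S (S m) makes [i - 1] compute to [S m]. *)
Section LastJoint.

Variable m : nat.
Local Notation i := (S (S m)).

Definition parent_velocity q qd : Vec := mv6 (XT i) (vel q qd (i - 1)).

Definition folded_energy q qd : R :=
  energy_sum q qd (i - 2)
  + qf6 (vel q qd (i - 1))
        (madd (inertia_hat (dpi (i - 1)))
              (mm6 (trm (XT i)) (mm6 (inertia_hat (dpi i)) (XT i))))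
        (vel q qd (i - 1)).

Definition joint_rotation_energy q qd : R :=
  let dIi := inertia_hat (dpi i) in
  qf6 (parent_velocity q qd)
      (msub (mm6 (trm (XJ i (q i))) (mm6 dIi (XJ i (q i)))) dIi)
      (parent_velocity q qd).

Definition joint_coupling q qd : R :=
  dot6 (Phi i) (mv6 (inertia_hat (dpi i)) (mv6 (XJ i (q i)) (parent_velocity q qd))).

Definition joint_axis_inertia : R := dot6 (Phi i) (mv6 (inertia_hat (dpi i)) (Phi i)).

Definition joint_power q qd : R :=
  dot6 (Phi i) (mv6 (inertia_hat (dpi i)) (vel q qd i)).

Lemma energy_sum_expand q qd :
  energy_sum q qd i = folded_energy q qd + joint_rotation_energy q qd
                      + 2 * qd i * joint_coupling q qd + qd i ^ 2 * joint_axis_inertia.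
Proof.
  unfold folded_energy, joint_rotation_energy, joint_coupling, joint_axis_inertia,
    parent_velocity, Defs.energy_sum.
  simpl (i - 1)%nat. simpl (i - 2)%nat. rewrite Nat.sub_0_r.
  cbn [rsum]. rewrite (vel_succ q qd (S m)).
  rewrite qf6_joint_step by apply inertia_hat_sym.
  rewrite qf6_madd, qf6_congruence. ring.
Qed.

Lemma joint_power_expand q qd :
  joint_power q qd = joint_coupling q qd + qd i * joint_axis_inertia.
Proof.
  unfold joint_power, joint_coupling, joint_axis_inertia, parent_velocity.
  simpl (i - 1)%nat. rewrite (vel_succ q qd (S m)), <- (mv6_mm6 (XJ i (q i))).
  unfold dot6, mv6; simpl; ring.
Qed.

Lemma parent_velocity_prefix q q' qd qd' :
  (forall j, (j < i)%nat -> q j = q' j /\ qd j = qd' j) ->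
  parent_velocity q qd = parent_velocity q' qd'.
Proof. intros H. unfold parent_velocity. f_equal. apply vel_prefix. intros; apply H; lia. Qed.

Lemma folded_energy_prefix q q' qd qd' :
  (forall j, (j < i)%nat -> q j = q' j /\ qd j = qd' j) ->
  folded_energy q qd = folded_energy q' qd'.
Proof.
  intros H. unfold folded_energy.
  rewrite (vel_prefix q q' qd qd'), (energy_sum_prefix q q' qd qd') by (intros; apply H; lia).
  reflexivity.
Qed.

Lemma joint_coefs_fupd_qd q qd s :
  joint_rotation_energy q (fupd qd i s) = joint_rotation_energy q qd /\
  joint_coupling q (fupd qd i s) = joint_coupling q qd.
Proof.
  assert (Hpv : parent_velocity q (fupd qd i s) = parent_velocity q qd).
  { apply parent_velocity_prefix. intros j Hj. rewrite fupd_lt by lia. auto. }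
  unfold joint_rotation_energy, joint_coupling. rewrite Hpv. auto.
Qed.

Lemma energy_sum_fupd_qd q qd s :
  energy_sum q (fupd qd i s) i = folded_energy q qd + joint_rotation_energy q qd
                                 + 2 * s * joint_coupling q qd + s ^ 2 * joint_axis_inertia.
Proof.
  destruct (joint_coefs_fupd_qd q qd s) as [Ha Hb].
  rewrite energy_sum_expand, <- Ha, <- Hb, fupd_eq.
  rewrite (folded_energy_prefix q q (fupd qd i s) qd); [reflexivity|].
  intros j Hj. rewrite fupd_lt by lia. auto.
Qed.

Lemma joint_power_fupd_qd q qd s :
  joint_power q (fupd qd i s) = joint_coupling q qd + s * joint_axis_inertia.
Proof.
  rewrite joint_power_expand, fupd_eq. f_equal. apply joint_coefs_fupd_qd.
Qed.

Hypothesis XJ_zero : meq6 (XJ i 0) idm.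

Lemma joint_rotation_energy_zero q qd : joint_rotation_energy (fupd q i 0) qd = 0.
Proof.
  unfold joint_rotation_energy. rewrite fupd_eq, qf6_msub, qf6_congruence.
  rewrite (qf6_ext (mv6 (XJ i 0) _) (parent_velocity (fupd q i 0) qd))
    by (intros; apply mv6_idm; auto).
  ring.
Qed.

Lemma energy_sum_eq0_iff :
  (forall q qd, energy_sum q qd i = 0) <->
  (forall q qd, joint_power q qd = 0) /\
  (forall q qd, joint_rotation_energy q qd = 0) /\
  (forall q qd, folded_energy q qd = 0).
Proof.
  split.
  - intros H.
    assert (Hcoef : forall q qd, folded_energy q qd + joint_rotation_energy q qd = 0
                                 /\ joint_coupling q qd = 0 /\ joint_axis_inertia = 0).
    { intros q qd. apply quadratic_coefs_eq0. intros s.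
      rewrite <- energy_sum_fupd_qd. apply H. }
    assert (Hfold : forall q qd, folded_energy q qd = 0).
    { intros q qd. destruct (Hcoef (fupd q i 0) qd) as [Hc _].
      rewrite joint_rotation_energy_zero in Hc.
      rewrite (folded_energy_prefix (fupd q i 0) q qd qd) in Hc; [lra|].
      intros j Hj. rewrite fupd_lt by lia. auto. }
    split; [|split]; intros q qd; [| |apply Hfold].
    + destruct (Hcoef q qd) as [_ [Hb Hp]]. rewrite joint_power_expand, Hb, Hp. ring.
    + destruct (Hcoef q qd) as [Hc _]. rewrite Hfold in Hc. lra.
  - intros [Hpow [Hrot Hfold]] q qd.
    destruct (affine_coefs_eq0 (joint_coupling q qd) joint_axis_inertia) as [Hb Hp].
    { intros s. rewrite <- joint_power_fupd_qd. apply Hpow. }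
    rewrite energy_sum_expand, Hfold, Hrot, Hb, Hp. ring.
Qed.

End LastJoint.

End Chain.

Theorem mainTheorem7
  (N : nat) (XT : nat -> Mat) (XJ : nat -> R -> Mat) (Phi : nat -> Vec)
  (HXT : forall k, (1 <= k <= N)%nat -> spatial_transform (XT k))
  (HXJ : forall k t, (1 <= k <= N)%nat -> spatial_transform (XJ k t))
  (HXJ0 : forall k, (1 <= k <= N)%nat -> meq6 (XJ k 0) idm)
  (HXJd : forall k t, (1 <= k <= N)%nat ->
     forall r c, (r < 6)%nat -> (c < 6)%nat ->
       derivable_pt_lim (fun s => XJ k s r c) t
         (- mm6 (cross6 (Phi k)) (XJ k t) r c))
  (dpi : nat -> Vec) (i : nat) (Hi : (2 <= i <= N)%nat)
  (Hzero : forall j, (i < j <= N)%nat -> meq6 (inertia_hat (dpi j)) mzero) :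
  (forall q qd : nat -> R, energy_sum XT XJ Phi dpi q qd N = 0) <->
  ((forall q qd : nat -> R,
      dot6 (Phi i) (mv6 (inertia_hat (dpi i)) (vel XT XJ Phi q qd i)) = 0) /\
   (forall q qd : nat -> R,
      let w := mv6 (XT i) (vel XT XJ Phi q qd (i - 1)) in
      let dIi := inertia_hat (dpi i) in
      let DeltaI := msub (mm6 (trm (XJ i (q i))) (mm6 dIi (XJ i (q i)))) dIi in
      qf6 w DeltaI w = 0) /\
   (forall q qd : nat -> R,
      let dIi := inertia_hat (dpi i) in
      let dIprev' := madd (inertia_hat (dpi (i - 1)%nat))
                          (mm6 (trm (XT i)) (mm6 dIi (XT i))) in
      let v := vel XT XJ Phi q qd (i - 1) in
      energy_sum XT XJ Phi dpi q qd (i - 2) + qf6 v dIprev' v = 0)).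
Proof.
  destruct i as [|[|m]]; [lia | lia |].
  assert (Htrunc : forall q qd, energy_sum XT XJ Phi dpi q qd N
                                = energy_sum XT XJ Phi dpi q qd (S (S m)))
    by (intros; apply energy_sum_trunc; auto; lia).
  assert (Hi0 : meq6 (XJ (S (S m)) 0) idm) by (apply HXJ0; lia).
  rewrite <- (energy_sum_eq0_iff XT XJ Phi dpi m Hi0).
  split; intros H q qd; [rewrite <- Htrunc | rewrite Htrunc]; apply H.
Qed.
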